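(* Consider the one-dimensional hierarchical heavy hitter algorithm described in the context, with threshold $\phi$ and accuracy parameter $\epsilon$ such that $1/\epsilon$ is a positive integer and $\epsilon<\phi/2$, run on a nonempty stream ($N>0$). Let $P$ be the set of prefixes it outputs, and for each prefix $p$ let $F'_p=f_{\max}(p)-s_p$ (with $s_p$ the final value computed by the output procedure) be the estimated conditioned count and $F_p$ the conditioned count of $p$ with respect to $P$. Then $|P|\le\frac{1}{\phi-2\epsilon}$, and for every $p\in P$, $F'_p-F_p\le\frac{1}{\phi-2\epsilon}\,\epsilon N$.
   Context: Hierarchy: a rooted tree in which every leaf has depth $h$; nodes are prefixes, leaves are fully specified elements; $e\preceq p$ means $p$ is an ancestor of or equal to $e$, $e\prec p$ means additionally $e\neq p$; non-root prefixes have a parent $\mathrm{par}(p)$. Stream: updates $(e,c)$, $e$ fully specified, $c$ a positive integer; $f(e)$ is the total increment of $e$, $N=\sum_e f(e)$, and $f(p)=\sum_{e\preceq p}f(e)$ for a prefix $p$. For a set $P$ of prefixes and a prefix $p$, with $P_p=\{q\in P:q\prec p\}$, the conditioned count is $F_p=\sum f(e)$ over fully specified $e\preceq p$ with $e\not\preceq q$ for all $q\in P_p$. Space Saving with $m$ counters: maintains at most $m$ items with counters and error values; on $(i,c)$, a tracked $i$ has its counter increased by $c$; otherwise if fewer than $m$ items are tracked $i$ is added with counter $c$, error $0$; otherwise an item $j$ with the smallest counter is replaced by $i$ with counter $c(j)+c$ and error $c(j)$. Estimates: tracked $i$: $f_{\max}(i)=c(i)$, $f_{\min}(i)=c(i)-\mathrm{err}(i)$;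 untracked $i$: $f_{\min}(i)=0$, $f_{\max}(i)=$ smallest counter (or $0$ if fewer than $m$ items tracked). Algorithm: one Space Saving instance with $1/\epsilon$ counters per depth; on $(e,c)$ feed $(p,c)$ to the instance of $p$'s depth for every prefix $p$ with $e\preceq p$; $f_{\min}(p),f_{\max}(p)$ are that instance's estimates. Output procedure: set $s_e=0$ for all prefixes; process prefixes in postorder; for prefix $e$, if $f_{\max}(e)-s_e\ge\phi N$ put $e$ in $P$ and add $f_{\min}(e)$ to $s_{\mathrm{par}(e)}$, else add $s_e$ to $s_{\mathrm{par}(e)}$ (no parent update at the root). *)

From HB Require Import structures.
From mathcomp Require Import all_boot all_order all_algebra.
Set Implicit Arguments. Unset Strict Implicit. Unset Printing Implicit Defensive.
Import Order.TTheory GRing.Theory Num.Theory.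

(* Nodes are prefixes; leaves are the fully specified elements.        *)
(* par root = root is a dummy convention: the root has no parent.      *)
Record hierarchy (T : finType) := Hierarchy {
  h_root : T;
  h_par : T -> T;
  h_depth : T -> nat;
  h_height : nat;
  h_par_root : h_par h_root = h_root;
  h_depth_root : h_depth h_root = 0;
  h_depth0 : forall p, h_depth p = 0 -> p = h_root;
  h_depth_par : forall p, p != h_root -> h_depth (h_par p) = (h_depth p).-1;
  h_leaf_depth : forall p, (forall q, q != h_root -> h_par q != p) ->
                   h_depth p = h_height
}.

Section Hier.
Variables (T : finType) (H : hierarchy T).

Definition child (q p : T) : bool := (q != h_root H) && (h_par H q == p).

Definition is_leaf (p : T) : bool := [forall q, ~~ child q p].

Definition preceq (e p : T) : bool :=
  [exists k : 'I_(h_depth H e).+1, iter k (h_par H) e == p].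

Definition prec (e p : T) : bool := preceq e p && (e != p).

(* the (unique) prefix of depth d that is an ancestor of e (for d <= depth e) *)
Definition anc_at (d : nat) (e : T) : T := iter (h_depth H e - d) (h_par H) e.

Definition valid_stream (s : seq (T * nat)) : bool :=
  all (fun u => is_leaf u.1 && (0 < u.2)%N) s.

Definition freq (s : seq (T * nat)) (e : T) : nat := \sum_(u <- s | u.1 == e) u.2.
Definition stream_N (s : seq (T * nat)) : nat := \sum_(u <- s) u.2.

Definition cond_count (s : seq (T * nat)) (P : {set T}) (p : T) : nat :=
  \sum_(e | is_leaf e && preceq e p &&
            [forall q in P, prec q p ==> ~~ preceq e q]) freq s e.

(* stream fed to the Space Saving instance of depth d *)
Definition stream_at (d : nat) (s : seq (T * nat)) : seq (T * nat) :=
  [seq (anc_at d u.1, u.2) | u <- s].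

End Hier.

(* Space Saving with m counters. A state is a list of                  *)
(* (item, counter, error) triples. Ties for the smallest counter may   *)
(* be broken arbitrarily: we model the algorithm as a relation.        *)
Section SpaceSaving.
Variable (T : eqType).
Definition ss_state := seq (T * nat * nat).

Definition ss_items (st : ss_state) : seq T := [seq x.1.1 | x <- st].
Definition ss_counters (st : ss_state) : seq nat := [seq x.1.2 | x <- st].

Inductive ss_step (m : nat) : ss_state -> T * nat -> ss_state -> Prop :=
| ss_incr st i c : i \in ss_items st ->
    ss_step m st (i, c)
      [seq (if x.1.1 == i then (x.1.1, x.1.2 + c, x.2) else x) | x <- st]
| ss_add st i c : i \notin ss_items st -> (size st < m)%N ->
    ss_step m st (i, c) (rcons st (i, c, 0%N))
| ss_replace st i c j cj ej : i \notin ss_items st -> (m <= size st)%N ->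
    (j, cj, ej) \in st -> (forall x, x \in st -> (cj <= x.1.2)%N) ->
    ss_step m st (i, c)
      [seq (if x.1.1 == j then (i, cj + c, cj) else x) | x <- st].

Inductive ss_exec (m : nat) : ss_state -> seq (T * nat) -> ss_state -> Prop :=
| ss_exec_nil st : ss_exec m st [::] st
| ss_exec_cons st u s st' st'' :
    ss_step m st u st' -> ss_exec m st' s st'' -> ss_exec m st (u :: s) st''.

(* smallest counter (used only when the state is nonempty) *)
Definition ss_min_counter (st : ss_state) : nat :=
  foldr minn (head 0%N (ss_counters st)) (ss_counters st).

Definition ss_fmax (m : nat) (st : ss_state) (i : T) : nat :=
  match [seq x <- st | x.1.1 == i] with
  | x :: _ => x.1.2
  | [::] => if (size st < m)%N then 0%N else ss_min_counter st
  end.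

Definition ss_fmin (st : ss_state) (i : T) : nat :=
  match [seq x <- st | x.1.1 == i] with
  | x :: _ => x.1.2 - x.2
  | [::] => 0%N
  end.
End SpaceSaving.

(* The hierarchical algorithm: instance of depth d has final state     *)
(* st d; estimates of p come from instance of depth (depth p).         *)
Section Output.
Local Open Scope ring_scope.
Variables (R : realFieldType) (T : finType) (H : hierarchy T).
Variables (m : nat) (st : nat -> ss_state T) (phi : R) (N : nat).

Definition hfmax (p : T) : nat := ss_fmax m (st (h_depth H p)) p.
Definition hfmin (p : T) : nat := ss_fmin (st (h_depth H p)) p.

(* test performed when prefix q is processed, with current value sq of s_q *)
Definition passes (q : T) (sq : nat) : bool :=
  phi * N%:R <= (hfmax q)%:R - sq%:R.

(* value of s_p at the time p is processed in postorder (fuel n must be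
   at least the height of the subtree of p; #|T| always suffices) *)
Fixpoint s_fuel (n : nat) (p : T) : nat :=
  match n with
  | 0 => 0%N
  | n'.+1 => \sum_(q | child H q p)
               (let sq := s_fuel n' q in if passes q sq then hfmin q else sq)
  end.

Definition s_val (p : T) : nat := s_fuel #|T| p.

Definition output : {set T} := [set p | passes p (s_val p)].

Definition est_cond (p : T) : R := (hfmax p)%:R - (s_val p)%:R.
End Output.

From HB Require Import structures.
From mathcomp Require Import all_boot all_order all_algebra.
From mathcomp Require Import zify lra.
Import Order.TTheory GRing.Theory Num.Theory.
Set Implicit Arguments. Unset Strict Implicit.

(* Space Saving with m = 1/eps counters keeps, for every item, fmin <= f <= fmax
   with fmax - f and f - fmin at most eps N.  Let carry(q) be what the output
   procedure adds to s_par(q): fmin(q) if q is output, s_q otherwise; so s_p is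
   the sum of carry over the children of p, and carry(q) <= f(q).  Telescoping
   over the tree gives sum_{p in P} F'_p = carry(root) + sum_{p in P}
   (fmax p - fmin p) <= N + 2 eps N |P|, and each output prefix has
   F'_p >= phi N, whence |P| (phi - 2 eps) <= 1.  For accuracy, F_p is f(p)
   minus the part of the children's subtrees lying below output prefixes; below
   a prefix q that part exceeds carry(q) by at most eps N per output prefix
   under q, so F'_p - F_p <= eps N |P|. *)

Section HierarchyTheory.
Variables (T : finType) (H : hierarchy T).
Local Notation par := (h_par H).
Local Notation dep := (h_depth H).
Local Notation root := (h_root H).
Local Notation preceq := (preceq H).
Local Notation child := (child H).

Lemma depth_par x : dep (par x) = (dep x).-1.
Proof.
have [->|x_root] := eqVneq x root; first by rewrite h_par_root h_depth_root.
exact: h_depth_par.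
Qed.

Lemma depth_iter_par n x : dep (iter n par x) = dep x - n.
Proof. by elim: n => [|n IHn]; rewrite ?subn0 // iterS depth_par IHn subnS. Qed.

Lemma preceqE x q : preceq x q = (iter (dep x - dep q) par x == q).
Proof.
apply/existsP/eqP => [[n /eqP <-]|xq].
  have n_le : (n <= dep x)%N by rewrite -ltnS ltn_ord.
  by rewrite depth_iter_par; congr iter; lia.
have lt_dx : (dep x - dep q < (dep x).+1)%N by rewrite ltnS leq_subr.
by exists (Ordinal lt_dx); apply/eqP.
Qed.

Lemma preceq_depth x q : preceq x q -> (dep q <= dep x)%N.
Proof. by rewrite preceqE => /eqP <-; rewrite depth_iter_par leq_subr. Qed.

Lemma preceq_refl x : preceq x x.
Proof. by rewrite preceqE subnn. Qed.

Lemma preceq_trans x y z : preceq x y -> preceq y z -> preceq x z.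
Proof.
move=> xy yz; have dxy := preceq_depth xy; have dyz := preceq_depth yz.
move: xy yz; rewrite !preceqE => /eqP xy /eqP yz.
have -> : dep x - dep z = (dep y - dep z) + (dep x - dep y) by lia.
by rewrite iterD xy yz.
Qed.

Lemma preceq_anti x y : preceq x y -> preceq y x -> x = y.
Proof.
move=> xy yx; have dxy := preceq_depth xy; have dyx := preceq_depth yx.
by move: xy; rewrite preceqE (_ : dep x - dep y = 0) //; [move/eqP | lia].
Qed.

Lemma preceq_depth_lt x y : preceq x y -> x != y -> (dep y < dep x)%N.
Proof.
move=> xy; apply: contraNT; rewrite -leqNgt => dxy.
by move: xy; rewrite preceqE (_ : dep x - dep y = 0) //; lia.
Qed.

Lemma preceq_ancestors x y z : preceq x y -> preceq x z -> (dep z <= dep y)%N ->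
  preceq y z.
Proof.
move=> xy xz dzy; have dxy := preceq_depth xy; have dxz := preceq_depth xz.
move: xy xz; rewrite !preceqE => /eqP xy.
by rewrite (_ : dep x - dep z = (dep y - dep z) + (dep x - dep y)) ?iterD ?xy //; lia.
Qed.

Lemma preceq_root x : preceq x root.
Proof.
rewrite preceqE h_depth_root subn0; apply/eqP/h_depth0.
by rewrite depth_iter_par subnn.
Qed.

Lemma child_depth c q : child c q -> dep c = (dep q).+1.
Proof.
case/andP=> c_root /eqP <-; rewrite (h_depth_par c_root).
by case E: (dep c) => [|n] //; rewrite (h_depth0 E) eqxx in c_root.
Qed.

Lemma child_preceq c q : child c q -> preceq c q.
Proof.
move=> cq; rewrite preceqE (child_depth cq) (_ : _ - _ = 1) ?subSnn //.
by case/andP: cq.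
Qed.

Lemma leaf_below x : exists2 y, preceq y x & dep y = h_height H.
Proof.
have [y yx ymax] := @arg_maxnP _ _ (preceq ^~ x) dep (preceq_refl x).
exists y => //; apply: h_leaf_depth => c c_root; apply/negP => /eqP cy.
have cy' : child c y by rewrite /child c_root cy eqxx.
by have /= := ymax c (preceq_trans (child_preceq cy') yx); rewrite (child_depth cy') ltnn.
Qed.

Lemma depth_le_height x : (dep x <= h_height H)%N.
Proof. by have [y /preceq_depth + <-] := leaf_below x. Qed.

Lemma height_lt_card : (h_height H < #|T|)%N.
Proof.
have [y _ dy] := leaf_below root.
have inj : injective (fun n : 'I_(dep y).+1 => iter n par y).
  move=> a b /(congr1 dep); rewrite !depth_iter_par => e.
  apply: val_inj => /=; have := ltn_ord a; have := ltn_ord b; lia.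
by have := leq_card _ inj; rewrite card_ord dy.
Qed.

Lemma childless_at_height c q : (h_height H <= dep q)%N -> ~~ child c q.
Proof.
move=> dq; apply/negP => /child_depth dc.
by have := depth_le_height c; rewrite dc; lia.
Qed.

Lemma hierarchy_ind (Pr : T -> Prop) :
  (forall q, (forall c, child c q -> Pr c) -> Pr q) -> forall q, Pr q.
Proof.
move=> IH; suff: forall n q, (h_height H - dep q < n)%N -> Pr q by move=> + q; apply.
elim=> [//|n IHn] q hq; apply: IH => c /child_depth dc; apply: IHn.
by have := depth_le_height c; lia.
Qed.

(* The child subtree containing x is that of the ancestor of x one level
   below q. *)
Lemma big_subtree (R : Type) (idx : R) (op : Monoid.com_law idx) (F : T -> R) q :
  \big[op/idx]_(x | preceq x q) F x =
  op (F q) (\big[op/idx]_(c | child c q) \big[op/idx]_(x | preceq x c) F x).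
Proof.
rewrite (bigD1 q) ?preceq_refl //=; congr (op _ _).
pose up x := iter (dep x - dep q).-1 par x.
have below x : preceq x q -> x != q -> dep (up x) = (dep q).+1 /\ par (up x) = q.
  move=> xq nxq; have := preceq_depth_lt xq nxq; move: xq; rewrite preceqE => /eqP xq lt.
  have e : (dep x - dep q).-1.+1 = dep x - dep q by lia.
  by rewrite /up depth_iter_par -iterS e xq; split => //; lia.
rewrite (partition_big up (child ^~ q)) /=; last first.
  move=> x /andP [xq nxq]; have [dup pup] := below x xq nxq.
  by rewrite /child pup eqxx andbT; apply/eqP => e; rewrite e h_depth_root in dup.
apply: eq_bigr => c cq; apply: eq_bigl => x; apply/idP/idP.
  case/andP=> /andP [xq nxq] /eqP <-; have [dup _] := below x xq nxq.
  by rewrite preceqE dup /up; apply/eqP; congr iter; lia.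
move=> xc; have dc := child_depth cq; have dxc := preceq_depth xc.
rewrite (preceq_trans xc (child_preceq cq)) /=; apply/andP; split.
  by apply/eqP => e; rewrite e in dxc; lia.
by move: xc; rewrite preceqE /up dc => /eqP <-; apply/eqP; congr iter; lia.
Qed.

End HierarchyTheory.

Section SpaceSavingInvariant.
Variables (T : finType) (m : nat).
Implicit Types (str : seq (T * nat)) (st : ss_state T).

Lemma freq_rcons str u i :
  freq (rcons str u) i = freq str i + (if u.1 == i then u.2 else 0).
Proof. by rewrite /freq -cats1 big_cat big_cons big_nil /= addn0. Qed.

Lemma stream_N_rcons str u : stream_N (rcons str u) = stream_N str + u.2.
Proof. by rewrite /stream_N -cats1 big_cat big_cons big_nil /= addn0. Qed.

Definition ss_inv str st : Prop :=
  [/\ uniq (ss_items st),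
      sumn (ss_counters st) = stream_N str,
      (forall x, x \in st -> freq str x.1.1 <= x.1.2 <= freq str x.1.1 + x.2
                             /\ m * x.2 <= stream_N str) &
      (forall i, i \notin ss_items st ->
         (forall x, x \in st -> freq str i <= x.1.2) /\
         (size st < m -> freq str i = 0))].

Lemma sumn_counters_update st (F : T * nat * nat -> T * nat * nat) y :
  uniq (ss_items st) -> y \in st -> (forall x, x.1.1 != y.1.1 -> F x = x) ->
  sumn (ss_counters (map F st)) + y.1.2 = sumn (ss_counters st) + (F y).1.2.
Proof.
elim: st => [//|x st IH] /= /andP [x_st uniq_st]; rewrite inE => y_xst Fid.
have [exy|nexy] := eqVneq x.1.1 y.1.1; last first.
  have y_st : y \in st by case/orP: y_xst => // /eqP exy; rewrite exy eqxx in nexy.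
  by rewrite Fid //; have := IH uniq_st y_st Fid; rewrite /ss_counters /=; lia.
have <- : x = y.
  case/orP: y_xst => [/eqP //|y_st]; case/negP: x_st; rewrite exy; exact: map_f.
rewrite map_id_in => [|z z_st]; first by rewrite /ss_counters /=; lia.
by apply: Fid; rewrite -exy; apply: contraNneq x_st => <-; exact: map_f.
Qed.

Lemma sumn_counters_ge st c : (forall x, x \in st -> c <= x.1.2) ->
  size st * c <= sumn (ss_counters st).
Proof.
elim: st => [//|x st IH] c_le.
have := c_le x (mem_head _ _).
have := IH (fun y y_st => c_le y (mem_behead (s := x :: st) y_st)).
rewrite /ss_counters /= mulSn; lia.
Qed.

Lemma foldr_minnP a (cs : seq nat) :
  foldr minn a cs \in a :: cs /\ forall c, c \in a :: cs -> foldr minn a cs <= c.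
Proof.
elim: cs => [|c cs [IHin IHle]] /=.
  by rewrite mem_head; split=> // c; rewrite inE => /eqP ->.
split.
  rewrite /minn; case: ltnP => _; first by rewrite !inE eqxx orbT.
  by move: IHin; rewrite !inE => /orP [->|->]; rewrite ?orbT.
move=> d; rewrite !inE => /or3P [d_a|/eqP ->|d_cs].
- by apply: leq_trans (geq_minr _ _) (IHle d _); rewrite inE d_a.
- exact: geq_minl.
- by apply: leq_trans (geq_minr _ _) (IHle d _); rewrite inE d_cs orbT.
Qed.

Lemma ss_min_counterP st : st != [::] ->
  ss_min_counter st \in ss_counters st /\
  forall x, x \in st -> ss_min_counter st <= x.1.2.
Proof.
case: st => [//|x0 st] _; rewrite /ss_min_counter.
set cs := ss_counters (x0 :: st).
have [min_in min_le] := foldr_minnP (head 0 cs) cs.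
split; first by move: min_in; rewrite inE => /orP [/eqP ->|]; rewrite ?mem_head.
by move=> x x_st; apply: min_le; rewrite inE (map_f (fun x => x.1.2)) ?orbT.
Qed.

Lemma ss_inv_incr str st i c : ss_inv str st -> i \in ss_items st ->
  ss_inv (rcons str (i, c))
         [seq (if x.1.1 == i then (x.1.1, x.1.2 + c, x.2) else x) | x <- st].
Proof.
move=> [uniq_st sum_st tracked untracked] i_st.
set F := fun x : T * nat * nat => if x.1.1 == i then (x.1.1, x.1.2 + c, x.2) else x.
have items_F : ss_items (map F st) = ss_items st.
  by rewrite /ss_items -map_comp; apply: eq_map => x /=; rewrite /F; case: ifP.
have [[[yi yc] ye] y_st /= yi_i] := mapP i_st.
split; rewrite ?items_F //.
- rewrite stream_N_rcons -sum_st.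
  have Fid x : x.1.1 != (yi, yc, ye).1.1 -> F x = x by rewrite /F -yi_i => /negbTE ->.
  by have := sumn_counters_update uniq_st y_st Fid; rewrite /F -yi_i eqxx /=; lia.
- move=> _ /mapP [[[xi xc] xe] x_st ->]; rewrite !freq_rcons stream_N_rcons /F /=.
  have /= [/andP [lo hi] err] := tracked _ x_st.
  move: lo hi; case: (eqVneq xi i) => [->|/negbTE ne]; rewrite ?eqxx 1?eq_sym ?ne /=;
    by split; try apply/andP; try split; lia.
- move=> j j_st; have [le_counters free] := untracked j j_st.
  have /negbTE ij : i != j by apply: contraNneq j_st => <-.
  rewrite freq_rcons /= ij addn0 size_map; split => // _ /mapP [x x_st ->].
  apply: leq_trans (le_counters x x_st) _.
  by rewrite /F; case: ifP => //= _; exact: leq_addr.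
Qed.

Lemma ss_inv_add str st i c : ss_inv str st -> i \notin ss_items st -> size st < m ->
  ss_inv (rcons str (i, c)) (rcons st (i, c, 0)).
Proof.
move=> [uniq_st sum_st tracked untracked] i_st free_slot.
have items_rcons : ss_items (rcons st (i, c, 0)) = rcons (ss_items st) i.
  by rewrite /ss_items map_rcons.
have [_ /(_ free_slot) fi0] := untracked i i_st.
split; rewrite ?items_rcons ?rcons_uniq ?i_st //.
- by rewrite stream_N_rcons -sum_st /ss_counters map_rcons -cats1 sumn_cat /=; lia.
- move=> [[xi xc] xe]; rewrite mem_rcons inE stream_N_rcons.
  case/orP=> [/eqP [-> -> ->]|x_st] /=.
    by rewrite freq_rcons eqxx fi0 /=; split; try apply/andP; try split; lia.
  have /= [/andP [lo hi] err] := tracked _ x_st.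
  have /negbTE ix : i != xi by apply: contraNneq i_st => ->; exact: (map_f _ x_st).
  by rewrite freq_rcons /= ix addn0; split; try apply/andP; try split; lia.
- move=> j; rewrite mem_rcons inE negb_or => /andP [ji j_st].
  have [le_counters fj0] := untracked j j_st.
  rewrite freq_rcons /= eq_sym (negbTE ji) addn0 size_rcons; split.
    by move=> x; rewrite mem_rcons inE => /orP [/eqP ->|/le_counters] //; rewrite fj0.
  by move=> ?; apply: fj0; lia.
Qed.

Lemma ss_inv_replace str st i c j cj ej : ss_inv str st -> i \notin ss_items st ->
  m <= size st -> (j, cj, ej) \in st -> (forall x, x \in st -> cj <= x.1.2) ->
  ss_inv (rcons str (i, c))
         [seq (if x.1.1 == j then (i, cj + c, cj) else x) | x <- st].
Proof.
move=> [uniq_st sum_st tracked untracked] i_st full j_st cj_min.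
set G := fun x : T * nat * nat => if x.1.1 == j then (i, cj + c, cj) else x.
set swap := fun y : T => if y == j then i else y.
have items_G : ss_items (map G st) = map swap (ss_items st).
  by rewrite /ss_items -!map_comp; apply: eq_map => x /=; rewrite /G /swap; case: ifP.
have [fi_le _] := untracked i i_st.
have /= [/andP [fj_le _] _] := tracked _ j_st.
(* the smallest counter is at most the average counter N/m *)
have m_cj : m * cj <= stream_N str.
  rewrite -sum_st; apply: leq_trans (sumn_counters_ge cj_min).
  by rewrite leq_mul2r full orbT.
have G_ge x : x \in map G st -> cj <= x.1.2.
  by case/mapP=> y y_st ->; rewrite /G; case: ifP => /= _; [lia | exact: cj_min].
split.
- rewrite items_G map_inj_in_uniq // => y z y_st z_st; rewrite /swap.
  case: (eqVneq y j) => [->|_]; case: (eqVneq z j) => [->|_] // e.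
    by rewrite e z_st in i_st.
  by rewrite -e y_st in i_st.
- rewrite stream_N_rcons /= -sum_st.
  have Gid x : x.1.1 != (j, cj, ej).1.1 -> G x = x by rewrite /G => /negbTE ->.
  by have := sumn_counters_update uniq_st j_st Gid; rewrite /G /= eqxx /=; lia.
- move=> _ /mapP [[[xi xc] xe] x_st ->]; rewrite !freq_rcons stream_N_rcons /G /=.
  case: (eqVneq xi j) => [_|_] /=.
    by rewrite eqxx; have /= := fi_le _ j_st; split; try apply/andP; try split; lia.
  have /= [/andP [lo hi] err] := tracked _ x_st.
  have /negbTE ix : i != xi by apply: contraNneq i_st => ->; exact: (map_f _ x_st).
  by rewrite ix addn0; split; try apply/andP; try split; lia.
- move=> y y_G; have /negbTE iy : i != y.
    apply: contraNneq y_G => <-; rewrite items_G; apply/mapP; exists j.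
      exact: (map_f (fun x => x.1.1) j_st).
    by rewrite /swap eqxx.
  rewrite freq_rcons /= iy addn0 size_map; split; last by rewrite ltnNge full.
  have [->|yj] := eqVneq y j; first by move=> x /G_ge; exact: leq_trans fj_le.
  have y_st : y \notin ss_items st.
    apply: contra y_G => y_st; rewrite items_G; apply/mapP.
    by exists y; rewrite /swap ?(negbTE yj).
  have [fy_le _] := untracked y y_st.
  by move=> x /G_ge; exact: leq_trans (fy_le _ j_st).
Qed.

Lemma ss_inv_step str st u st' : ss_inv str st -> ss_step m st u st' ->
  ss_inv (rcons str u) st'.
Proof.
move=> inv step; case: step inv => {st u st'}
  [st i c i_st|st i c i_st free|st i c j cj ej i_st full j_st cj_min] inv.
- exact: (@ss_inv_incr str st i c).
- exact: (@ss_inv_add str st i c).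
- exact: (@ss_inv_replace str st i c j cj ej).
Qed.

Lemma ss_inv_exec st str st' : ss_exec m st str st' ->
  forall pre, ss_inv pre st -> ss_inv (pre ++ str) st'.
Proof.
elim=> [st0 pre|st0 u str0 st1 st2 step _ IH pre] inv; first by rewrite cats0.
by rewrite -cat_rcons; apply: IH; exact: ss_inv_step step.
Qed.

Lemma ss_inv_nil : ss_inv [::] [::].
Proof.
split=> [//||//|i _]; first by rewrite /stream_N big_nil.
by split=> // _; rewrite /freq big_nil.
Qed.

Lemma ss_min_counter_bounds str st : ss_inv str st -> 0 < m -> m <= size st ->
  m * ss_min_counter st <= stream_N str /\
  forall i, i \notin ss_items st -> freq str i <= ss_min_counter st.
Proof.
move=> [_ sum_st _ untracked] m_gt0 full.
have st_nil : st != [::] by rewrite -size_eq0 -lt0n (leq_trans m_gt0 full).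
have [/mapP [y y_st ->] min_le] := ss_min_counterP st_nil.
split; last by move=> i /untracked [+ _]; apply.
rewrite -sum_st; apply: leq_trans (sumn_counters_ge min_le).
by rewrite leq_mul2r full orbT.
Qed.

Lemma ss_exec_estimates str st i : 0 < m -> ss_exec m [::] str st ->
  [/\ ss_fmin st i <= freq str i <= ss_fmax m st i,
      m * (ss_fmax m st i - freq str i) <= stream_N str &
      m * (freq str i - ss_fmin st i) <= stream_N str].
Proof.
move=> m_gt0 exe; have inv := ss_inv_exec exe ss_inv_nil.
case: (inv) => [_ _ tracked untracked]; rewrite /ss_fmax /ss_fmin.
case E: [seq x <- st | x.1.1 == i] => [|[[xi xc] xe] rest] /=; last first.
  have /= := mem_head (xi, xc, xe) rest; rewrite -E mem_filter => /andP [/eqP <- x_st].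
  have /= [/andP [lo hi] err] := tracked _ x_st.
  by split; [apply/andP; split | ..]; try apply: leq_trans (leq_mul (leqnn m) _) err; lia.
have i_st : i \notin ss_items st.
  apply/mapP => -[x x_st xi].
  by have := mem_filter (fun x => x.1.1 == i) x st; rewrite E x_st xi eqxx.
case: ifP => [small|/negbT].
  by rewrite (proj2 (untracked i i_st) small) subnn muln0.
rewrite -leqNgt => full; have [m_min fi_min] := ss_min_counter_bounds inv m_gt0 full.
rewrite subn0 (fi_min i i_st); split=> //; apply: leq_trans m_min;
  by rewrite leq_mul2l ?leq_subr ?fi_min ?orbT.
Qed.

End SpaceSavingInvariant.

Section Output.
Variables (R : realFieldType) (T : finType) (H : hierarchy T) (k : nat)
  (st : nat -> ss_state T) (phi : R) (N : nat).
Local Notation P := (output H k st phi N).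
Local Notation s_val := (s_val H k st phi N).
Local Notation fmax := (hfmax H k st).
Local Notation fmin := (hfmin H st).
Local Notation dep := (h_depth H).
Local Notation height := (h_height H).

(* the amount the output procedure adds to s_par(q) when it processes q *)
Definition carry q : nat := if q \in P then fmin q else s_val q.

Lemma s_fuel_stable n n' p : height - dep p <= n -> height - dep p <= n' ->
  s_fuel H k st phi N n p = s_fuel H k st phi N n' p.
Proof.
elim: n n' p => [|n IHn] [|n'] p dn dn' //=; try by rewrite big_pred0 // => c;
  apply/negbTE/childless_at_height; lia.
apply: eq_bigr => c /child_depth dc.
by rewrite (IHn n'); have := depth_le_height H c; lia.
Qed.

Lemma s_val_children p : s_val p = (\sum_(c | child H c p) carry c)%N.
Proof.
rewrite /s_val /carry; have := height_lt_card H.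
case E: #|T| => [//|n] lt_n /=; apply: eq_bigr => c _.
by rewrite inE /s_val E (@s_fuel_stable n n.+1) //; lia.
Qed.

Variable s : seq (T * nat).
Hypothesis N_def : stream_N s = N.
Hypothesis k_gt0 : 0 < k.
Hypothesis st_exec : forall d, d <= height -> ss_exec k [::] (stream_at H d s) (st d).

Definition prefix_freq q := \sum_(x | preceq H x q) freq s x.

Lemma prefix_freq_children q :
  prefix_freq q = freq s q + \sum_(c | child H c q) prefix_freq c.
Proof. exact: big_subtree. Qed.

Lemma prefix_freq_stream q : prefix_freq q = \sum_(u <- s | preceq H u.1 q) u.2.
Proof.
rewrite (partition_big (fun u : T * nat => u.1) (preceq H ^~ q)) //.
apply: eq_bigr => x xq; apply: eq_bigl => u.
by case: (eqVneq u.1 x) => [->|_]; rewrite ?xq ?andbF.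
Qed.

Lemma prefix_freq_root : prefix_freq (h_root H) = N.
Proof. by rewrite prefix_freq_stream -N_def; apply: eq_bigl => u; exact: preceq_root. Qed.

Lemma freq_stream_at q : freq (stream_at H (dep q) s) q = prefix_freq q.
Proof.
by rewrite prefix_freq_stream /freq big_map; apply: eq_bigl => u; rewrite preceqE.
Qed.

Lemma stream_N_stream_at d : stream_N (stream_at H d s) = N.
Proof. by rewrite /stream_N big_map. Qed.

Lemma prefix_estimates q :
  [/\ fmin q <= prefix_freq q <= fmax q,
      k * (fmax q - prefix_freq q) <= N & k * (prefix_freq q - fmin q) <= N].
Proof.
by have := ss_exec_estimates q k_gt0 (st_exec (depth_le_height H q));
  rewrite freq_stream_at stream_N_stream_at.
Qed.

Lemma carry_le_prefix_freq q : carry q <= prefix_freq q.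
Proof.
elim/(hierarchy_ind (H := H)): q => q IH.
rewrite /carry; case: ifP => _; first by case: (prefix_estimates q) => /andP [].
rewrite s_val_children prefix_freq_children; apply: leq_trans (leq_addl _ _).
exact: leq_sum.
Qed.

Lemma freq_not_leaf e : valid_stream H s -> ~~ is_leaf H e -> freq s e = 0.
Proof.
move=> /allP valid not_leaf; rewrite /freq big1_seq // => u /andP [/eqP ue /valid].
by rewrite ue (negbTE not_leaf).
Qed.

Definition covered_by_output q x : bool := [exists r in P, preceq H r q && preceq H x r].

Definition covered q := \sum_(x | preceq H x q && covered_by_output q x) freq s x.

Definition card_output_below q := \sum_(r | preceq H r q) (r \in P : nat).

Lemma card_output_below_children q :
  card_output_below q = (q \in P) + \sum_(c | child H c q) card_output_below c.
Proof. exact: big_subtree. Qed.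

Lemma card_output_below_le q : card_output_below q <= #|P|.
Proof.
rewrite /card_output_below -sum1_card big_mkcond [X in _ <= X]big_mkcond /=.
by apply: leq_sum => r _; case: (preceq H r q); case: (r \in P).
Qed.

Lemma covered_by_output_child q c x : q \notin P -> child H c q -> preceq H x c ->
  covered_by_output q x = covered_by_output c x.
Proof.
move=> qP cq xc; apply/existsP/existsP => -[r /and3P [rP rq xr]]; exists r;
  rewrite rP xr andbT //=; last exact: preceq_trans rq (child_preceq cq).
have rq' : r != q by apply: contraNneq qP => <-.
apply: preceq_ancestors xr xc _.
by have := preceq_depth_lt rq rq'; rewrite (child_depth cq).
Qed.

Lemma covered_children q : q \notin P -> covered q = \sum_(c | child H c q) covered c.
Proof.
move=> qP; have q_unc : covered_by_output q q = false.
  apply/negbTE/existsP => -[r /and3P [rP rq qr]].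
  by move: rP; rewrite (preceq_anti rq qr) (negbTE qP).
rewrite /covered big_mkcondr big_subtree q_unc /= add0n.
apply: eq_bigr => c cq; rewrite big_mkcondr; apply: eq_bigr => x xc.
by rewrite (covered_by_output_child qP cq xc).
Qed.

Lemma covered_output q : q \in P -> covered q = prefix_freq q.
Proof.
move=> qP; apply: eq_bigl => x; case xq: (preceq H x q) => //=.
by apply/existsP; exists q; rewrite qP preceq_refl xq.
Qed.

Lemma conditioned_child p c x : child H c p -> preceq H x c ->
  [forall q in P, prec H q p ==> ~~ preceq H x q] = ~~ covered_by_output c x.
Proof.
move=> cp xc; have dc := child_depth cp; apply/forallP/existsPn => [cond r|unc q].
  apply/negP => /and3P [rP rc xr].
  have rp : prec H r p.
    rewrite /prec (preceq_trans rc (child_preceq cp)) /=.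
    by apply: contraTneq (preceq_depth rc) => ->; rewrite dc -ltnNge.
  by have /implyP/(_ rP)/implyP/(_ rp) := cond r; rewrite xr.
apply/implyP => qP; apply/implyP => /andP [qp nqp]; apply: contra (unc q) => xq.
rewrite qP xq andbT /=; apply: preceq_ancestors xq xc _.
by have := preceq_depth_lt qp nqp; rewrite dc.
Qed.

Lemma cond_count_children p : valid_stream H s ->
  cond_count H s P p + \sum_(c | child H c p) covered c = prefix_freq p.
Proof.
move=> valid; set cond := fun e => [forall q in P, prec H q p ==> ~~ preceq H e q].
have -> : cond_count H s P p = \sum_(e | preceq H e p) (if cond e then freq s e else 0).
  rewrite /cond_count [LHS]big_mkcond [RHS]big_mkcond /=; apply: eq_bigr => e _.
  have [_|/(freq_not_leaf valid) ->] := boolP (is_leaf H e); last by rewrite !if_same.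
  by case: (preceq H e p).
have cond_p : cond p.
  apply/forallP => q; apply/implyP => _; apply/implyP => /andP [qp nqp].
  by apply: contra nqp => pq; rewrite (preceq_anti qp pq).
rewrite big_subtree cond_p prefix_freq_children -addnA; congr (_ + _).
rewrite -big_split; apply: eq_bigr => c cp.
rewrite /covered big_mkcondr /prefix_freq -big_split; apply: eq_bigr => x xc.
rewrite /cond (conditioned_child cp xc) /=.
by case: covered_by_output; rewrite ?add0n ?addn0.
Qed.

Local Open Scope ring_scope.

Definition sum_output_below q (G : T -> R) : R :=
  \sum_(p | preceq H p q) (if p \in P then G p else 0).

Lemma sum_output_below_children q G : sum_output_below q G =
  (if q \in P then G q else 0) + \sum_(c | child H c q) sum_output_below c G.
Proof. exact: big_subtree. Qed.

Lemma sum_output_below_root G : sum_output_below (h_root H) G = \sum_(p in P) G p.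
Proof.
rewrite /sum_output_below big_mkcond [RHS]big_mkcond.
by apply: eq_bigr => p; rewrite preceq_root.
Qed.

Lemma sum_est_cond_below q :
  sum_output_below q (est_cond H k st phi N) =
  (carry q)%:R + sum_output_below q (fun p => (fmax p)%:R - (fmin p)%:R).
Proof.
elim/(hierarchy_ind (H := H)): q => q IH.
rewrite !sum_output_below_children (eq_bigr _ IH) big_split /= -natr_sum.
rewrite /carry /est_cond s_val_children; case: ifP => _; lra.
Qed.

Local Notation eps := (k%:R^-1 : R).

Lemma epsN_ge0 : 0 <= eps * N%:R.
Proof. by rewrite mulr_ge0 ?invr_ge0 ?ler0n. Qed.

Lemma natr_sub_le_eps a b : (b <= a)%N -> (k * (a - b) <= N)%N ->
  a%:R - b%:R <= eps * N%:R.
Proof.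
move=> ba kab; rewrite -natrB // mulrC ler_pdivlMr ?ltr0n //.
by rewrite -natrM ler_nat mulnC.
Qed.

Lemma fmax_sub_fmin q : (fmax q)%:R - (fmin q)%:R <= 2 * (eps * N%:R).
Proof.
have [/andP [lo hi] hi_err lo_err] := prefix_estimates q.
by have := natr_sub_le_eps hi hi_err; have := natr_sub_le_eps lo lo_err; lra.
Qed.

Lemma card_output_le : (0 < N)%N -> eps < phi / 2 -> #|P|%:R <= (phi - 2 * eps)^-1.
Proof.
move=> N_gt0 eps_lt; have gap_gt0 : 0 < phi - 2 * eps by lra.
have := sum_est_cond_below (h_root H); rewrite !sum_output_below_root.
have est_ge : #|P|%:R * (phi * N%:R) <= \sum_(p in P) est_cond H k st phi N p.
  by rewrite mulr_natl -sumr_const; apply: ler_sum => p; rewrite inE.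
have err_le : \sum_(p in P) ((fmax p)%:R - (fmin p)%:R) <= #|P|%:R * (2 * (eps * N%:R)).
  by rewrite mulr_natl -sumr_const; apply: ler_sum => p _; exact: fmax_sub_fmin.
have carry_le : (carry (h_root H))%:R <= N%:R :> R.
  by rewrite ler_nat -prefix_freq_root carry_le_prefix_freq.
have N_pos : 0 < N%:R :> R by rewrite ltr0n.
by rewrite -div1r ler_pdivlMr // -(ler_pM2r N_pos) mul1r; lra.
Qed.

Lemma covered_le q :
  (covered q)%:R <= (carry q)%:R + eps * N%:R * (card_output_below q)%:R.
Proof.
elim/(hierarchy_ind (H := H)): q => q IH.
rewrite /carry card_output_below_children; case: ifP => qP; last first.
  rewrite covered_children ?qP // s_val_children add0n !natr_sum mulr_sumr -big_split.
  exact: ler_sum.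
have [/andP [lo _] _ lo_err] := prefix_estimates q.
have := natr_sub_le_eps lo lo_err; rewrite covered_output // natrD mulrDr mulr1.
have : 0 <= eps * N%:R * (\sum_(c | child H c q) card_output_below c)%:R.
  by rewrite mulr_ge0 ?epsN_ge0.
lra.
Qed.

Lemma est_cond_sub_cond_count_le p : valid_stream H s -> p \in P ->
  est_cond H k st phi N p - (cond_count H s P p)%:R <= eps * N%:R * #|P|%:R.
Proof.
move=> valid pP.
have /(congr1 (GRing.natmul (1 : R))) := cond_count_children p valid.
rewrite natrD => cond_eq.
have covered_sum : \sum_(c | child H c p) (covered c)%:R <= \sum_(c | child H c p)
    ((carry c)%:R + eps * N%:R * (card_output_below c)%:R) :> R.
  by apply: ler_sum => c _; exact: covered_le.
rewrite big_split /= -mulr_sumr -!natr_sum -s_val_children in covered_sum.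
have [/andP [_ hi] hi_err _] := prefix_estimates p.
have := natr_sub_le_eps hi hi_err.
have : eps * N%:R * (card_output_below p)%:R <= eps * N%:R * #|P|%:R.
  by rewrite ler_wpM2l ?epsN_ge0 // ler_nat card_output_below_le.
rewrite card_output_below_children pP natrD mulrDr mulr1 /est_cond; lra.
Qed.

End Output.

Unset Implicit Arguments. Set Strict Implicit.
Local Open Scope ring_scope.

Theorem theorem3 (R : realFieldType) (T : finType) (H : hierarchy T)
  (phi eps : R) (k : nat) (s : seq (T * nat)) (st : nat -> ss_state T) :
  (0 < k)%N -> eps = (k%:R)^-1 -> eps < phi / 2 ->
  valid_stream H s -> (0 < stream_N s)%N ->
  (forall d, (d <= h_height H)%N -> ss_exec k [::] (stream_at H d s) (st d)) ->
  let N := stream_N s in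
  let P := output H k st phi N in
  (#|P|%:R <= (phi - 2 * eps)^-1) /\
  (forall p, p \in P ->
     est_cond H k st phi N p - (cond_count H s P p)%:R
       <= (phi - 2 * eps)^-1 * eps * N%:R).
Proof.
move=> k_gt0 -> eps_lt valid N_gt0 exec N P.
have card_le := card_output_le (erefl N) k_gt0 exec N_gt0 eps_lt.
split=> // p pP.
apply: le_trans (est_cond_sub_cond_count_le (erefl N) k_gt0 exec valid pP) _.
rewrite -[X in _ <= X]mulrA [X in _ <= X]mulrC.
by rewrite ler_wpM2l ?epsN_ge0.
Qed.
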